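(* Let $h_0>0$, $U>2h_0$, $|h|\le h_0$, and let $e,e'\in\mathscr B_\Lambda$ be distinct nearest-neighbour bonds. Then \[ P\Bigl(\mathrm{ad}_{\mathcal I_h((T_e)^{\rm off})}\bigl((T_{e'})^{\rm off}\bigr)\Bigr)^{\rm diag}P=0 . \]
   Context: $\Lambda=(\mathbb Z/L\mathbb Z)^d$, $L\in2\mathbb N$, $\mathscr B_\Lambda$ its unordered nearest-neighbour bonds. Fermionic Fock space over $\ell^2(\Lambda)\otimes\mathbb C^2$ with CAR operators $c_{x\sigma}$, $n_{x\sigma}=c^*_{x\sigma}c_{x\sigma}$, $n_x=n_{x\uparrow}+n_{x\downarrow}$; $\mathcal H^{\rm hf}_\Lambda=\ker(\sum_xn_x-|\Lambda|)$; $D_\Lambda=\sum_xn_{x\uparrow}n_{x\downarrow}$; $\eta_x=(-1)^{x_1+\dots+x_d}$; $M_\Lambda=\sum_x\eta_x\frac12(n_{x\uparrow}-n_{x\downarrow})$. All operators act on $\mathcal H^{\rm hf}_\Lambda$. $P$ is the projection onto $\ker D_\Lambda$ in $\mathcal H^{\rm hf}_\Lambda$ (singly occupied configurations). $P_m$ is the spectral projection of $D_\Lambda$ at eigenvalue $m$; $B^{(k)}=\sum_mP_{m+k}BP_m$, $B^{\rm diag}=B^{(0)}$, $B^{\rm off}=\sum_{k\ne0}B^{(k)}$. For $e=\{x,y\}$, $T_e=-t\sum_\sigma(c^*_{x\sigma}c_{y\sigma}+c^*_{y\sigma}c_{x\sigma})$ ($t\in\mathbb R$). For an operator $A$ supported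 on $X$ of grade $k\ne0$, $\mathcal I_h(A)=\frac1{kU}\sum_{n\ge0}(\frac h{kU})^n\mathrm{ad}^{\,n}_{M_\Lambda}(A)$ with $\mathrm{ad}_S(A)=[S,A]$, and $\mathcal I_h(T_e^{\rm off}):=\sum_{k\ne0}\mathcal I_h((T_e)^{(k)})$. *)

(* Half-filled Hubbard model on the
   torus (Z/LZ)^d, fermionic Fock space realised concretely in the
   occupation-number basis (Jordan-Wigner representation of the CAR). *)
From HB Require Import structures.
From mathcomp Require Import all_boot all_order all_algebra.
From mathcomp Require Import all_classical all_reals all_analysis.
From mathcomp Require Import complex.
Import numFieldTopology.Exports numFieldNormedType.Exports.
Import Order.TTheory GRing.Theory Num.Theory.

Set Implicit Arguments.
Unset Strict Implicit.
Unset Printing Implicit Defensive.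

Local Open Scope ring_scope.
Local Open Scope complex_scope.
Local Open Scope classical_set_scope.

(* The complex numbers C = R[i] over a real field R, with its topology
   (needed for limits of matrix-valued series). *)
Definition Cx (R : realType) : Type := R[i].
HB.instance Definition _ (R : realType) := GRing.ClosedField.on (Cx R).
HB.instance Definition _ (R : realType) := Num.ClosedField.on (Cx R).
HB.instance Definition _ (R : realType) :=
  PseudoPointedMetric.copy (Cx R) (Cx R)^o.

Definition rC (R : realType) (x : R) : Cx R := x%:C.

Definition site (L d : nat) : finType := {ffun 'I_d -> 'I_L}.

Definition nn (L d : nat) (x y : site L d) : Prop :=
  exists i : 'I_d,
    (forall j : 'I_d, j != i -> x j = y j) /\
    ((nat_of_ord (y i) = ((nat_of_ord (x i)).+1 %% L)%N) \/
     (nat_of_ord (x i) = ((nat_of_ord (y i)).+1 %% L)%N)).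

Definition eta (R : realType) (L d : nat) (x : site L d) : Cx R :=
  (-1) ^+ (\sum_(i < d) nat_of_ord (x i))%N.

(* one-particle modes (x, sigma), sigma = true for spin up *)
Definition mode (L d : nat) : finType := (site L d * bool)%type.
(* occupation-number configurations: basis of the Fock space *)
Definition config (L d : nat) : finType := {ffun mode L d -> bool}.

Definition fockdim (L d : nat) : nat := #|{: config L d}|.
Definition fockop (R : realType) (L d : nat) : Type :=
  'M[Cx R]_(fockdim L d).

Definition fock_mx (R : realType) (L d : nat)
    (f : config L d -> config L d -> Cx R) : fockop R L d :=
  \matrix_(i, j) f (enum_val i) (enum_val j).

Definition empty_mode (L d : nat) (b : config L d) (m : mode L d) : config L d :=
  [ffun m' => if m' == m then false else b m'].

Definition jw_sign (R : realType) (L d : nat) (b : config L d) (m : mode L d)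
  : Cx R :=
  (-1) ^+ #|[set m' : mode L d | (enum_rank m' < enum_rank m)%N && b m']|.

Definition annih (R : realType) (L d : nat) (m : mode L d) : fockop R L d :=
  fock_mx (fun a b => if b m && (a == empty_mode b m) then jw_sign R b m else 0).

Definition adjmx (R : realType) (n : nat) (A : 'M[Cx R]_n) : 'M[Cx R]_n :=
  \matrix_(i, j) conjc (A j i).

Definition creat (R : realType) (L d : nat) (m : mode L d) : fockop R L d :=
  adjmx (annih R m).

Definition numop (R : realType) (L d : nat) (m : mode L d) : fockop R L d :=
  creat R m *m annih R m.

Definition hopF (R : realType) (L d : nat) (t : R) (x y : site L d)
  : fockop R L d :=
  - rC t *: \sum_(s : bool)
      (creat R (x, s) *m annih R (y, s) + creat R (y, s) *m annih R (x, s)).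

Definition DF (R : realType) (L d : nat) : fockop R L d :=
  \sum_(x : site L d) (numop R (x, true) *m numop R (x, false)).

Definition MF (R : realType) (L d : nat) : fockop R L d :=
  \sum_(x : site L d)
     (eta R x * 2^-1) *: (numop R (x, true) - numop R (x, false)).

(* H^hf = ker(N - |Lambda|), spanned by configurations with |Lambda| particles *)
Definition hfconf (L d : nat) : finType :=
  {b : config L d | #|[set m : mode L d | b m]| == #|{: site L d}|}.

Definition hfdim (L d : nat) : nat := #|{: hfconf L d}|.
Definition hfop (R : realType) (L d : nat) : Type := 'M[Cx R]_(hfdim L d).

(* restriction to H^hf of an operator preserving particle number *)
Definition to_hf (R : realType) (L d : nat) (A : fockop R L d) : hfop R L d :=
  \matrix_(i, j) A (enum_rank (val (enum_val i))) (enum_rank (val (enum_val j))).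

Definition T_e (R : realType) (L d : nat) (t : R) (x y : site L d)
  : hfop R L d := to_hf (hopF t x y).
Definition D_L (R : realType) (L d : nat) : hfop R L d := to_hf (DF R L d).
Definition M_L (R : realType) (L d : nat) : hfop R L d := to_hf (MF R L d).

Definition is_spec_proj (R : realType) (n : nat) (A : 'M[Cx R]_n) (lam : Cx R)
    (Q : 'M[Cx R]_n) : Prop :=
  Q *m Q = Q /\ adjmx Q = Q /\
  (forall v : 'cV[Cx R]_n, (A - lam%:M) *m v = 0 <-> Q *m v = v).

Definition spec_proj (R : realType) (n : nat) (A : 'M[Cx R]_n) (lam : Cx R)
  : 'M[Cx R]_n := get (is_spec_proj A lam).

Definition Pm (R : realType) (L d : nat) (m : int) : hfop R L d :=
  spec_proj (D_L R L d) (m%:~R).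

Definition Pker (R : realType) (L d : nat) : hfop R L d :=
  spec_proj (D_L R L d) 0.

(* grading: B^(k) = sum_m P_{m+k} B P_m ; the eigenvalues of D_Lambda
   (number of doubly occupied sites) lie in {0,..,|Lambda|}, and P_m = 0
   for any other m, so summing over m in {0..|Lambda|} is the full sum. *)
Definition grade (R : realType) (L d : nat) (k : int) (B : hfop R L d)
  : hfop R L d :=
  \sum_(m < #|{: site L d}|.+1)
     (Pm R L d ((m%:Z) + k) *m B *m Pm R L d (m%:Z)).

Definition diagpart (R : realType) (L d : nat) (B : hfop R L d) : hfop R L d :=
  grade 0 B.

(* B^off = sum_{k != 0} B^(k), with k in [-|Lambda|, |Lambda|]
   (all other grades vanish) *)
Definition kval (L d : nat) (k : 'I_(#|{: site L d}|.*2.+1)) : int :=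
  (k%:Z - (#|{: site L d}|)%:Z)%R.

Definition offpart (R : realType) (L d : nat) (B : hfop R L d) : hfop R L d :=
  \sum_(k < #|{: site L d}|.*2.+1 | kval k != 0) grade (kval k) B.

Definition ad (R : realType) (n : nat) (S A : 'M[Cx R]_n) : 'M[Cx R]_n :=
  S *m A - A *m S.

Definition Ih (R : realType) (L d : nat) (U h : R) (k : int) (A : hfop R L d)
  : hfop R L d :=
  lim ((fun N : nat =>
          (rC (k%:~R * U))^-1 *:
            \sum_(n < N) ((rC h / rC (k%:~R * U)) ^+ n) *:
                          iter n (ad (M_L R L d)) A) @ \oo).

Definition Ih_off (R : realType) (L d : nat) (U h : R) (B : hfop R L d)
  : hfop R L d :=
  \sum_(k < #|{: site L d}|.*2.+1 | kval k != 0)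
     Ih U h (kval k) (grade (kval k) B).

From Pilot Require Import Defs.
From HB Require Import structures.
From mathcomp Require Import all_boot all_order all_algebra.
From mathcomp Require Import all_classical all_reals all_analysis.
From mathcomp Require Import complex ring zify.
Import numFieldTopology.Exports numFieldNormedType.Exports.
Import Order.TTheory GRing.Theory Num.Theory.

Set Implicit Arguments.
Unset Strict Implicit.
Unset Printing Implicit Defensive.

Local Open Scope ring_scope.

(* In the occupation-number basis D_Lambda, M_Lambda and the projections P_m
   are diagonal and T_e only moves one particle along the bond e.  Grading and
   the series I_h merely rescale matrix entries, so I_h(T_e^off) and T_e'^off
   connect configurations only by a hop along e (resp. e') that changes the
   number of doubly occupied sites.  A matrix element of the commutator between
   two configurations with every site singly occupied therefore runs through
   two such hops.  The first creates a doubly occupied site and an empty one;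
   for the second to restore single occupancy it must move a particle from
   the former to the latter, i.e. along the same bond, so e = e'. *)

Lemma sumr_neq0 (V : nmodType) (I : finType) (P : pred I) (F : I -> V) :
  \sum_(i | P i) F i != 0 -> exists2 i, P i & F i != 0.
Proof.
move=> nz; have /exists_inP[i Pi Fi] : [exists (i | P i), F i != 0]; last by exists i.
apply: contraNT nz; rewrite negb_exists_in => /forall_inP F0.
by apply/eqP/big1 => i /F0; rewrite negbK => /eqP.
Qed.

Section DiagonalMatrices.
Variable R : realType.
Implicit Types n : nat.

(* Also when [u] diverges: [lim] then returns the junk value [point = 0]. *)
Lemma lim_entry_eq0 n (u : nat -> 'M[Cx R]_n) i j :
  (forall N, u N i j = 0) -> lim (u @ \oo)%classic i j = 0.
Proof.
move=> u0; have [->|/cvgNpoint cvu] := eqVneq (lim (u @ \oo)%classic) point.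
  by rewrite mxE.
apply: (closed_cvg (fun M : 'M[Cx R]_n => M i j = 0)) cvu; last exact: nearW.
apply: (@preimage_closed _ _ (fun M : 'M[Cx R]_n => M i j) [set 0]%classic).
  by move=> M _; exact: coord_continuous.
apply/accessible_closed_set1/hausdorff_accessible.
exact: (@norm_hausdorff _ (Cx R)^o).
Qed.

Lemma adjmx_mul n (A B : 'M[Cx R]_n) : adjmx (A *m B) = adjmx B *m adjmx A.
Proof.
apply/matrixP => i j; rewrite !mxE rmorph_sum; apply: eq_bigr => k _.
by rewrite !mxE rmorphM mulrC.
Qed.

Lemma is_spec_proj_uniq n (A : 'M[Cx R]_n) lam Q Q' :
  is_spec_proj A lam Q -> is_spec_proj A lam Q' -> Q = Q'.
Proof.
have absorb (P P' : 'M[Cx R]_n) :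
    is_spec_proj A lam P -> is_spec_proj A lam P' -> P' *m P = P.
  move=> [PP [_ kerP]] [_ [_ kerP']]; apply/matrixP => i j.
  have /matrixP/(_ i 0) : P' *m col j P = col j P.
    by apply/kerP'/kerP; rewrite !colE mulmxA PP.
  by rewrite !colE mulmxA -!colE !mxE.
move=> hQ hQ'; have [_ [adjQ _]] := hQ; have [_ [adjQ' _]] := hQ'.
rewrite -adjQ -{1}(absorb _ _ hQ hQ') adjmx_mul adjQ adjQ'.
exact: absorb.
Qed.

Lemma is_spec_proj_diag_mx n (a : 'rV[Cx R]_n) lam :
  is_spec_proj (diag_mx a) lam (diag_mx (\row_i (a 0 i == lam)%:R)).
Proof.
split; [|split].
- rewrite mulmx_diag; congr diag_mx; apply/rowP => i; rewrite !mxE.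
  by case: eqP => _; rewrite ?mulr1 ?mulr0.
- apply/matrixP => i j; rewrite !mxE rmorphMn rmorph_nat.
  by have [->|ne] := eqVneq i j; rewrite // eq_sym (negPf ne) !mulr0n.
move=> v; have -> : diag_mx a - lam%:M = diag_mx (\row_i (a 0 i - lam)).
  by apply/matrixP => i j; rewrite !mxE mulrnBl.
rewrite !mul_diag_mx; split=> /matrixP Hv; apply/matrixP => i k;
  move: (Hv i k); rewrite !mxE; case: eqP => [->|/eqP neq].
- by rewrite mul1r.
- by move/eqP; rewrite mulf_eq0 subr_eq0 (negPf neq) /= => /eqP->; rewrite mulr0.
- by rewrite subrr !mul0r.
- by rewrite mul0r => <-; rewrite mulr0.
Qed.

Lemma spec_proj_diag_mx n (a : 'rV[Cx R]_n) lam :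
  spec_proj (diag_mx a) lam = diag_mx (\row_i (a 0 i == lam)%:R).
Proof.
apply: (is_spec_proj_uniq _ (is_spec_proj_diag_mx a lam)).
by apply: getPex; exact: ex_intro (is_spec_proj_diag_mx a lam).
Qed.

Lemma iter_ad_diag_mx n (s : 'rV[Cx R]_n) A k :
  iter k (ad (diag_mx s)) A = \matrix_(i, j) ((s 0 i - s 0 j) ^+ k * A i j).
Proof.
elim: k => [|k IH]; first by apply/matrixP => i j; rewrite mxE mul1r.
apply/matrixP => i j; rewrite iterS IH /ad mul_diag_mx mul_mx_diag !mxE exprS.
ring.
Qed.
End DiagonalMatrices.

Section Configurations.
Variables L d : nat.
Implicit Types (a b c : config L d) (m : mode L d) (x y z : site L d).

(* [a] arises from [b] by moving the particle in mode [m2] to mode [m1] (and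
   [a = b] when [m1 = m2]): the support of [c^*_m1 c_m2]. *)
Definition hop a b m1 m2 : bool :=
  [&& a m1, b m2 & empty_mode a m1 == empty_mode b m2].

Definition site_occ b z : nat := b (z, true) + b (z, false).

Definition double_occ b : nat := \sum_z (b (z, true) && b (z, false)).

Definition bond_hop x y a b : Prop :=
  exists s, hop a b (x, s) (y, s) || hop a b (y, s) (x, s).

Lemma hop_same_mode_eq a b m : hop a b m m -> a = b.
Proof.
case/and3P => am bm /eqP e; apply/ffunP => m'.
have [->|ne] := eqVneq m' m; first by rewrite am bm.
by have := congr1 (fun f : config L d => f m') e; rewrite !ffunE (negPf ne).
Qed.

Lemma hop_occ a b m1 m2 m : hop a b m1 m2 ->
  (a m + (m == m2) = b m + (m == m1))%N.
Proof.
case/and3P => am1 bm2 /eqP e.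
have := congr1 (fun f : config L d => f m) e; rewrite !ffunE.
have [e1|ne1] := eqVneq m m1; have [e2|ne2] := eqVneq m m2.
- by move: am1 bm2; rewrite -e1 -e2 => -> ->.
- by move: am1; rewrite -e1 => -> <-.
- by move: bm2; rewrite -e2 => -> ->.
- by move=> ->.
Qed.

Lemma hop_site_occ a b v u s z : hop a b (v, s) (u, s) ->
  (site_occ a z + (z == u) = site_occ b z + (z == v))%N.
Proof.
move=> H; have := hop_occ (z, true) H; have := hop_occ (z, false) H.
rewrite /site_occ !xpair_eqE; case: s {H} => /=; rewrite ?andbT ?andbF ?addn0; lia.
Qed.

Lemma card_occupied b : #|[set m | b m]| = (\sum_z site_occ b z)%N.
Proof.
rewrite -sum1_card big_mkcond /=.
under [RHS]eq_bigr => z _ do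
  rewrite /site_occ -(big_bool _ (fun s => nat_of_bool (b (z, s)))).
by rewrite pair_bigA; apply: eq_bigr => -[z s] _; rewrite inE; case: (b (z, s)).
Qed.

Lemma site_occ_half_filled b :
  #|[set m | b m]| = #|{: site L d}| -> double_occ b = 0%N ->
  forall z, site_occ b z = 1%N.
Proof.
move=> card_b /eqP; rewrite sum_nat_eq0 => /forallP no_double.
have /(@leqif_sum _ predT) [_ sum_eq] : forall z', predT z' ->
    (site_occ b z' <= 1 ?= iff (site_occ b z' == 1))%N.
  move=> z' _; move: (no_double z'); rewrite /site_occ.
  by case: (b (z', true)); case: (b (z', false)).
move=> z; have /forallP/(_ z)/eqP// : [forall z', site_occ b z' == 1%N].
by rewrite -sum_eq -card_occupied card_b sum1_card.
Qed.

Lemma hop_undo a c b v u v' u' s r :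
  (forall z, site_occ a z = 1%N) -> (forall z, site_occ b z = 1%N) -> c != b ->
  hop c b (v', s) (u', s) -> hop a c (v, r) (u, r) -> v = u' /\ u = v'.
Proof.
move=> occ_a occ_b ne_cb Hcb Hac.
have ne_u'v' : u' != v'.
  by apply: contraNneq ne_cb => e; rewrite e in Hcb; rewrite (hop_same_mode_eq Hcb).
have balance z : ((z == u) + (z == u') = (z == v) + (z == v'))%N.
  by have := hop_site_occ z Hac; have := hop_site_occ z Hcb; rewrite occ_a occ_b; lia.
have /eqP eu : v' == u.
  move: (balance v'); rewrite eqxx [v' == u']eq_sym (negPf ne_u'v').
  by case: (v' == u); case: (v' == v).
split=> //; apply/eqP; move: (balance u'); rewrite eqxx -eu (negPf ne_u'v') eq_sym.
by case: (v == u').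
Qed.

Lemma bond_hop_undo a c b x y x' y' :
  (forall z, site_occ a z = 1%N) -> (forall z, site_occ b z = 1%N) -> c != b ->
  bond_hop x' y' c b -> bond_hop x y a c -> [set x; y] = [set x'; y'].
Proof.
move=> occ_a occ_b ne_cb [s /orP[]Hcb] [r /orP[]Hac];
  by have [-> ->] := hop_undo occ_a occ_b ne_cb Hcb Hac; rewrite // finset.setUC.
Qed.
End Configurations.

Section FockOperators.
Variables (R : realType) (L d : nat).
Implicit Types (m : mode L d) (i j : 'I_(fockdim L d)).

Lemma jw_sign_conjK (b : config L d) m : conjc (jw_sign R b m) * jw_sign R b m = 1.
Proof. by rewrite /jw_sign rmorphXn rmorphN1 -exprMn mulrNN mulr1 expr1n. Qed.

Lemma creat_annih_supp m1 m2 i j :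
  (creat R m1 *m annih R m2) i j != 0 -> hop (enum_val i) (enum_val j) m1 m2.
Proof.
rewrite mxE => /sumr_neq0[k _]; rewrite !mxE.
case: ifP => [/andP[im1 /eqP ki]|_]; last by rewrite conjc0 mul0r eqxx.
case: ifP => [/andP[jm2 /eqP kj]|_]; last by rewrite mulr0 eqxx.
by rewrite /hop im1 jm2 -ki kj eqxx.
Qed.

Lemma numop_diag m : numop R m = diag_mx (\row_i ((enum_val i : config L d) m)%:R).
Proof.
apply/matrixP => i j; rewrite !mxE.
rewrite (bigD1 (enum_rank (empty_mode (enum_val i) m))) //=.
rewrite big1 ?addr0 => [|k ne_k]; last first.
  rewrite !mxE; case: ifP => [/andP[_ /eqP ki]|_]; last by rewrite conjc0 mul0r.
  by rewrite -ki enum_valK eqxx in ne_k.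
rewrite !mxE enum_rankK eqxx andbT.
have [<-|ne_ij] := eqVneq i j.
  by case: (enum_val i m); rewrite ?eqxx ?jw_sign_conjK ?conjc0 ?mul0r.
rewrite mulr0n; case: ifP => [im|_]; last by rewrite conjc0 mul0r.
case: ifP => [/andP[jm /eqP e]|_]; last by rewrite mulr0.
suff : enum_val i = enum_val j by move/enum_val_inj/eqP; rewrite (negPf ne_ij).
by apply: (@hop_same_mode_eq _ _ _ _ m); rewrite /hop im jm e eqxx.
Qed.

Lemma DF_diag : DF R L d = diag_mx (\row_i (double_occ (enum_val i : config L d))%:R).
Proof.
rewrite /DF; under eq_bigr do rewrite !numop_diag mulmx_diag.
rewrite -raddf_sum; congr diag_mx; apply/rowP => i.
rewrite summxE !mxE /double_occ natr_sum; apply: eq_bigr => x _.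
by rewrite !mxE -natrM mulnb.
Qed.

Lemma MF_diag : MF R L d = diag_mx (\row_i \sum_(x : site L d) Defs.eta R x * 2^-1 *
  (((enum_val i : config L d) (x, true))%:R - (enum_val i (x, false))%:R)).
Proof.
apply/matrixP => i j; rewrite summxE !mxE -sumrMnl; apply: eq_bigr => x _.
by rewrite !numop_diag !mxE -mulrnBl mulrnAr.
Qed.

Lemma hopF_supp (t : R) (x y : site L d) i j : hopF t x y i j != 0 ->
  bond_hop x y (enum_val i) (enum_val j).
Proof.
rewrite mxE summxE mulf_eq0 negb_or => /andP[_ /sumr_neq0[s _]].
rewrite mxE => nz; exists s; move: nz; apply: contraNT.
have vanish m1 m2 := contraNeq (@creat_annih_supp m1 m2 i j).
by rewrite negb_or => /andP[/vanish-> /vanish->]; rewrite addr0.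
Qed.
End FockOperators.

Section HalfFilling.
Variables (R : realType) (L d : nat).
Implicit Types (i j k : 'I_(hfdim L d)) (x y : site L d) (B G X Y : hfop R L d).

Definition hf_config i : config L d := val (enum_val i).

Lemma hf_config_inj : injective hf_config.
Proof. by move=> i j /val_inj/enum_val_inj. Qed.

(* [hfconf] counts the occupied modes with a classical set. *)
Lemma hf_config_card i : #|[set m | hf_config i m]| = #|{: site L d}|.
Proof.
rewrite -(eqP (valP (enum_val i))); apply: eq_card => m.
by rewrite inE; apply/idP/idP => [|/set_mem//]; exact: mem_set.
Qed.

Lemma to_hf_diag_mx (a : 'rV[Cx R]_(fockdim L d)) :
  to_hf (diag_mx a) = diag_mx (\row_i a 0 (enum_rank (hf_config i))).
Proof.
apply/matrixP => i j.
by rewrite !mxE (inj_eq enum_rank_inj) (inj_eq hf_config_inj).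
Qed.

Lemma D_L_diag : D_L R L d = diag_mx (\row_i (double_occ (hf_config i))%:R).
Proof.
rewrite /D_L DF_diag to_hf_diag_mx; congr diag_mx.
by apply/rowP => i; rewrite !mxE enum_rankK.
Qed.

Lemma Pm_diag (m : int) :
  Pm R L d m = diag_mx (\row_i ((double_occ (hf_config i))%:Z == m)%:R).
Proof.
rewrite /Pm D_L_diag spec_proj_diag_mx; congr diag_mx.
by apply/rowP => i; rewrite !mxE [X in X == _]pmulrn eqr_int.
Qed.

Lemma Pker_diag : Pker R L d = diag_mx (\row_i (double_occ (hf_config i) == 0%N)%:R).
Proof.
rewrite /Pker D_L_diag spec_proj_diag_mx; congr diag_mx.
by apply/rowP => i; rewrite !mxE pnatr_eq0.
Qed.

Lemma T_e_supp (t : R) x y i j : T_e t x y i j != 0 ->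
  bond_hop x y (hf_config i) (hf_config j).
Proof. by rewrite mxE => /hopF_supp; rewrite !enum_rankK. Qed.

Lemma grade_supp (k : int) B i j : grade k B i j != 0 ->
  B i j != 0 /\ (double_occ (hf_config i))%:Z = (double_occ (hf_config j))%:Z + k.
Proof.
rewrite summxE => /sumr_neq0[m _]; rewrite !Pm_diag mul_mx_diag mul_diag_mx !mxE.
rewrite !mulf_eq0 !negb_or !pnatr_eq0 !eqb0 !negbK => /andP[/andP[/eqP Di Bij] /eqP Dj].
by rewrite Di Dj.
Qed.

Lemma off_grades_supp (F : int -> hfop R L d -> hfop R L d) B i j :
    (forall (n : int) G i j, F n G i j != 0 -> G i j != 0) ->
    (\sum_(k < #|{: site L d}|.*2.+1 | kval k != 0)
       F (kval k) (grade (kval k) B)) i j != 0 ->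
  B i j != 0 /\ double_occ (hf_config i) != double_occ (hf_config j).
Proof.
move=> F_supp; rewrite summxE => /sumr_neq0[k k_ne0 /F_supp/grade_supp[Bij Dij]].
split=> //; apply: contraNneq k_ne0 => Dij'.
by move: Dij; rewrite Dij' -{1}[_%:Z]addr0 => /addrI <-.
Qed.

Lemma Ih_supp (U h : R) (k : int) G i j : Ih U h k G i j != 0 -> G i j != 0.
Proof.
apply: contraNneq => G0; apply/eqP/lim_entry_eq0 => N.
rewrite mxE summxE big1 ?mulr0 // => n _.
by rewrite /M_L MF_diag to_hf_diag_mx iter_ad_diag_mx !mxE G0 !mulr0.
Qed.

Definition bond_off_supp x y X : Prop := forall i j, X i j != 0 ->
  bond_hop x y (hf_config i) (hf_config j) /\
  double_occ (hf_config i) != double_occ (hf_config j).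

Lemma offpart_T_e_supp (t : R) x y : bond_off_supp x y (offpart (T_e t x y)).
Proof. by move=> i j /(@off_grades_supp (fun _ G => G)) [//|/T_e_supp]. Qed.

Lemma Ih_off_T_e_supp (U h t : R) x y : bond_off_supp x y (Ih_off U h (T_e t x y)).
Proof. by move=> i j /(off_grades_supp (@Ih_supp U h)) [/T_e_supp]. Qed.

Lemma bond_off_mul_eq0 x y x' y' X Y i k j :
    [set x; y] != [set x'; y'] -> bond_off_supp x y X -> bond_off_supp x' y' Y ->
    double_occ (hf_config i) = 0%N -> double_occ (hf_config j) = 0%N ->
  X i k * Y k j = 0.
Proof.
move=> ne_bonds X_supp Y_supp Di Dj.
have [->|/X_supp[hop_ik _]] := eqVneq (X i k) 0; first by rewrite mul0r.
have [->|/Y_supp[hop_kj Dkj]] := eqVneq (Y k j) 0; first by rewrite mulr0.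
case/eqP: ne_bonds; apply: bond_hop_undo hop_kj hop_ik.
- exact: site_occ_half_filled (hf_config_card i) Di.
- exact: site_occ_half_filled (hf_config_card j) Dj.
- by apply: contraNneq Dkj => ->.
Qed.

Lemma ad_bond_off_eq0 x y x' y' X Y i j :
    [set x; y] != [set x'; y'] -> bond_off_supp x y X -> bond_off_supp x' y' Y ->
    double_occ (hf_config i) = 0%N -> double_occ (hf_config j) = 0%N ->
  ad X Y i j = 0.
Proof.
move=> ne_bonds X_supp Y_supp Di Dj; rewrite !mxE !big1 ?subrr // => k _.
- by apply: bond_off_mul_eq0 Y_supp X_supp Di Dj; rewrite eq_sym.
- exact: bond_off_mul_eq0 X_supp Y_supp Di Dj.
Qed.
End HalfFilling.

Theorem lemmaB1 (R : realType) (L d : nat) (hL : ~~ odd L)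
    (t h0 U h : R) (hh0 : 0 < h0) (hU : 2 * h0 < U) (hh : `|h| <= h0)
    (x y x' y' : site L d) (he : nn x y) (he' : nn x' y')
    (hne : [set x; y] != [set x'; y']) :
  Pker R L d *m
    diagpart (ad (Ih_off U h (T_e t x y)) (offpart (T_e t x' y')))
  *m Pker R L d = 0.
Proof.
apply/matrixP => i j; rewrite Pker_diag mul_mx_diag mul_diag_mx !mxE.
have [Di|_] := eqVneq (double_occ (hf_config i)) 0%N; last by rewrite !mul0r.
have [Dj|_] := eqVneq (double_occ (hf_config j)) 0%N; last by rewrite mulr0.
set X := ad (Ih_off U h (T_e t x y)) (offpart (T_e t x' y')).
have X0 : X i j = 0.
  apply: ad_bond_off_eq0 hne _ _ Di Dj.
  - exact: Ih_off_T_e_supp.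
  - exact: offpart_T_e_supp.
have [->|/grade_supp[]] := eqVneq (diagpart X i j) 0; first by rewrite mulr0 mul0r.
by rewrite X0 eqxx.
Qed.
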